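(* Let $G$ be a group and $L,R$ nonempty subsets of $G$. The two-sided group digraph $2\mathrm{S}(G;L,R)$ is strongly connected if and only if $G=\mathcal{W}(L^{-1})\mathcal{W}(R)=\mathcal{W}(L)\mathcal{W}(R^{-1})$ and there exist integers $i,j\ge 0$ such that $e=w_{L^{-1},i+1}\,w_{R,i}$ and $e=w_{L^{-1},j}\,w_{R,j+1}$ for some words $w_{L^{-1},i+1},w_{R,i},w_{L^{-1},j},w_{R,j+1}$ of the indicated lengths.
   Context: For nonempty subsets $L,R$ of a group $G$, the two-sided group digraph $2\mathrm{S}(G;L,R)$ has vertex set $G$ and a directed arc $(g,h)$ from $g$ to $h$ if and only if $h=l^{-1}gr$ for some $l\in L$, $r\in R$ (loops allowed; there are no multiple arcs). For a nonempty subset $S\subseteq G$, a word in $S$ of length $n$ is a product $s_1s_2\cdots s_n$ with all $s_i\in S$ (not necessarily distinct); $w_{S,n}$ denotes the group element given by some word in $S$ of length $n$, where a word of length $0$ is the identity $e$; different occurrences of $w_{S,n}$ may denote different words. $\mathcal{W}(S)$ is the set of elements of $G$ expressible as words in $S$ of positive finite length, and for subsets $A,B$, $AB=\{ab: a\in A,b\in B\}$. A digraph is strongly connected if for every pair of vertices $g,h$ there is a directed path from $g$ to $h$ and one from $h$ to $g$. *)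

From Stdlib Require Import Relations.

Record Group := {
  carrier :> Type;
  gmul : carrier -> carrier -> carrier;
  ginv : carrier -> carrier;
  gone : carrier;
  gmulA : forall x y z, gmul x (gmul y z) = gmul (gmul x y) z;
  gmul1l : forall x, gmul gone x = x;
  gmul1r : forall x, gmul x gone = x;
  gmulVl : forall x, gmul (ginv x) x = gone;
  gmulVr : forall x, gmul x (ginv x) = gone
}.

Arguments gmul {g}.
Arguments ginv {g}.
Arguments gone {g}.

Section Defs.
Variable G : Group.

Definition nonempty (S : G -> Prop) : Prop := exists x, S x.

Definition invset (S : G -> Prop) : G -> Prop :=
  fun x => exists s, S s /\ x = ginv s.

Definition setmul (A B : G -> Prop) : G -> Prop :=
  fun g => exists a b, A a /\ B b /\ g = gmul a b.

Inductive is_word (T : G -> Prop) : nat -> G -> Prop :=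
  | word_nil : is_word T 0 gone
  | word_snoc : forall n w s, is_word T n w -> T s -> is_word T (S n) (gmul w s).

Definition Wd (S : G -> Prop) : G -> Prop :=
  fun x => exists n, 1 <= n /\ is_word S n x.

Definition twoS_arc (L R : G -> Prop) (g h : G) : Prop :=
  exists l r, L l /\ R r /\ h = gmul (gmul (ginv l) g) r.

Definition dpath (L R : G -> Prop) : G -> G -> Prop :=
  clos_refl_trans G (twoS_arc L R).

Definition strongly_connected (L R : G -> Prop) : Prop :=
  forall g h : G, dpath L R g h /\ dpath L R h g.

End Defs.

Arguments nonempty {G}.
Arguments invset {G}.
Arguments setmul {G}.
Arguments is_word {G}.
Arguments Wd {G}.
Arguments twoS_arc {G}.
Arguments dpath {G}.
Arguments strongly_connected {G}.

(* A path of length n in 2S(G;L,R) from g to h says exactly that h = A g B with A a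
   word of length n in L^{-1} and B a word of length n in R.  Strong connectivity
   thus amounts to: every h is A B and every g is C D with balanced lengths.  The
   products W(L^{-1})W(R) and W(L)W(R^{-1}) supply such factorizations with
   unbalanced lengths, and the two identity words e = a b with |a| = |b| + 1 and
   e = a' b' with |b'| = |a'| + 1 can be inserted in the middle to move the length
   difference by -1 or +1 at will, until it vanishes. *)
From Stdlib Require Import Relations PeanoNat Lia.

Lemma diag_of_shift_closed (P : nat -> nat -> Prop) i j :
  (forall p q, P p q -> P (p + S i) (q + i)) ->
  (forall p q, P p q -> P (p + j) (q + S j)) ->
  forall p q, P p q -> exists n, P n n.
Proof.
  intros shift_l shift_r.
  assert (by_gap : forall d p q, p + d = q \/ q + d = p -> P p q -> exists n, P n n).
  { induction d as [|d IHd]; intros p q gap Ppq.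
    - exists p. replace q with p in Ppq by lia. exact Ppq.
    - destruct gap.
      + apply (IHd (p + S i) (q + i)); [lia | auto].
      + apply (IHd (p + j) (q + S j)); [lia | auto]. }
  intros p q. apply (by_gap (max (p - q) (q - p))). lia.
Qed.

Section Words.

Variable G : Group.
Local Infix "*" := gmul.
Local Notation "x ^-1" := (ginv x) (at level 2, left associativity, format "x ^-1").
Local Notation e := (@gone G).
Implicit Types (T : G -> Prop) (g h x y w : G).

Ltac assoc := repeat rewrite ?gmul1l, ?gmul1r, ?gmulA.

Lemma mul_eq_one_inv x y : x * y = e -> x = y^-1.
Proof.
  intro xy. rewrite <- (gmul1r G x), <- (gmulVr G y), gmulA, xy. apply gmul1l.
Qed.

Lemma mul_eq_one_invr x y : x * y = e -> y = x^-1.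
Proof.
  intro xy. rewrite <- (gmul1l G y), <- (gmulVl G x), <- gmulA, xy. apply gmul1r.
Qed.

Lemma ginv_one : e^-1 = e.
Proof. symmetry. apply mul_eq_one_inv, gmul1l. Qed.

Lemma ginvK x : x^-1^-1 = x.
Proof. symmetry. apply mul_eq_one_invr, gmulVl. Qed.

Lemma ginv_mul x y : (x * y)^-1 = y^-1 * x^-1.
Proof.
  symmetry. apply mul_eq_one_invr.
  rewrite gmulA, <- (gmulA G x), gmulVr, gmul1r. apply gmulVr.
Qed.

Lemma mul3_eq_one_mid x g y : x * g * y = e -> g = x^-1 * y^-1.
Proof.
  rewrite <- gmulA. intro xgy. rewrite <- (mul_eq_one_invr _ _ xgy), <- gmulA, gmulVr.
  symmetry. apply gmul1r.
Qed.

Lemma is_word_cat T m n x y :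
  is_word T m x -> is_word T n y -> is_word T (m + n) (x * y).
Proof.
  intros Wx Wy; induction Wy as [|n y s _ IH Ts].
  - rewrite Nat.add_0_r, gmul1r. exact Wx.
  - rewrite Nat.add_succ_r, gmulA. constructor; assumption.
Qed.

Lemma is_word1 T s : T s -> is_word T 1 s.
Proof. intro Ts. rewrite <- (gmul1l G s). repeat constructor. exact Ts. Qed.

Lemma is_word_cons T n s w : T s -> is_word T n w -> is_word T (S n) (s * w).
Proof. intros Ts Ww. exact (is_word_cat _ 1 n _ _ (is_word1 _ _ Ts) Ww). Qed.

Lemma is_word_uncons T n w :
  is_word T (S n) w -> exists s w', T s /\ is_word T n w' /\ w = s * w'.
Proof.
  revert w; induction n as [|n IHn]; intros w Ww; inversion Ww as [|? w0 s W0 Ts]; subst.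
  - inversion W0; subst. exists s, e. repeat split; [assumption | constructor | assoc].
    reflexivity.
  - destruct (IHn _ W0) as (s' & w' & Ts' & Ww' & ->).
    exists s', (w' * s). repeat split; [assumption | constructor; assumption |].
    symmetry. apply gmulA.
Qed.

Lemma is_word_inv T n w : is_word T n w -> is_word (invset T) n w^-1.
Proof.
  induction 1 as [|n w s _ IH Ts].
  - rewrite ginv_one. constructor.
  - rewrite ginv_mul. apply is_word_cons; [exists s; split |]; auto.
Qed.

Lemma is_word_invset_inv T n w : is_word (invset T) n w -> is_word T n w^-1.
Proof.
  induction 1 as [|n w s _ IH [t [Tt ->]]].
  - rewrite ginv_one. constructor.
  - rewrite ginv_mul, ginvK. apply is_word_cons; auto.
Qed.

Lemma Wd_of_word T n x : is_word T (S n) x -> Wd T x.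
Proof. intro Wx. exists (S n). split; [lia | exact Wx]. Qed.

Variables L R : G -> Prop.

Definition sandwich p q g h : Prop :=
  exists A B, is_word (invset L) p A /\ is_word R q B /\ h = A * g * B.

Lemma sandwich_refl g : sandwich 0 0 g g.
Proof. exists e, e. repeat split; try constructor. assoc. reflexivity. Qed.

Lemma sandwich_trans p q p' q' g h k :
  sandwich p q g h -> sandwich p' q' h k -> sandwich (p + p') (q + q') g k.
Proof.
  intros (A & B & WA & WB & ->) (A' & B' & WA' & WB' & ->).
  exists (A' * A), (B * B'). repeat split.
  - rewrite Nat.add_comm. apply is_word_cat; assumption.
  - apply is_word_cat; assumption.
  - assoc. reflexivity.
Qed.

Lemma sandwich_of_arc g h : twoS_arc L R g h -> sandwich 1 1 g h.
Proof.
  intros (l & r & Ll & Rr & ->). exists l^-1, r.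
  repeat split; apply is_word1; [exists l |]; auto.
Qed.

Lemma dpath_of_sandwich n : forall g h, sandwich n n g h -> dpath L R g h.
Proof.
  induction n as [|n IHn]; intros g h (A & B & WA & WB & ->).
  - inversion WA; inversion WB; subst. assoc. apply rt_refl.
  - inversion WA as [|? A0 s WA0 [l [Ll ->]]]; subst.
    destruct (is_word_uncons _ _ _ WB) as (r & B0 & Rr & WB0 & ->).
    apply rt_trans with (l^-1 * g * r).
    + apply rt_step. exists l, r; auto.
    + replace (A0 * l^-1 * g * (r * B0)) with (A0 * (l^-1 * g * r) * B0)
        by (assoc; reflexivity).
      apply IHn. exists A0, B0. auto.
Qed.

Lemma dpath_iff_sandwich g h : dpath L R g h <-> exists n, sandwich n n g h.
Proof.
  split.
  - induction 1 as [g h arc | g | g h k _ [n Hn] _ [n' Hn']].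
    + exists 1. apply sandwich_of_arc, arc.
    + exists 0. apply sandwich_refl.
    + exists (n + n'). eapply sandwich_trans; eassumption.
  - intros [n Hn]. exact (dpath_of_sandwich n g h Hn).
Qed.

Lemma sandwich_one_of_mul p q a b :
  is_word (invset L) p a -> is_word R q b -> a * b = e -> sandwich p q e e.
Proof. intros Wa Wb ab. exists a, b. repeat split; auto. rewrite gmul1r. auto. Qed.

Section Necessity.

Variables (l r : G).
Hypotheses (Ll : L l) (Rr : R r).

Let Ll' : invset L l^-1.
Proof. exists l. auto. Qed.

Lemma setmul_W_of_dpath g :
  dpath L R (l^-1 * r) g -> setmul (Wd (invset L)) (Wd R) g.
Proof.
  rewrite dpath_iff_sandwich. intros (n & A & B & WA & WB & ->).
  exists (A * l^-1), (r * B).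
  repeat split; [eapply Wd_of_word; constructor; eauto |
                 eapply Wd_of_word, is_word_cons; eauto | assoc; reflexivity].
Qed.

Lemma setmul_W_inv_of_dpath g :
  dpath L R (l^-1 * g * r) e -> setmul (Wd L) (Wd (invset R)) g.
Proof.
  rewrite dpath_iff_sandwich. intros (n & A & B & WA & WB & AgB).
  exists (A * l^-1)^-1, (r * B)^-1. repeat split.
  - eapply Wd_of_word, is_word_invset_inv. constructor; eauto.
  - eapply Wd_of_word, is_word_inv, is_word_cons; eauto.
  - apply mul3_eq_one_mid. rewrite AgB. assoc. reflexivity.
Qed.

Lemma left_loop_of_dpath : dpath L R e l ->
  exists i a b, is_word (invset L) (S i) a /\ is_word R i b /\ a * b = e.
Proof.
  rewrite dpath_iff_sandwich. intros (n & A & B & WA & WB & lAB).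
  exists n, (l^-1 * A), B. repeat split; [apply is_word_cons; auto | auto |].
  rewrite gmul1r in lAB. rewrite <- gmulA, <- lAB. apply gmulVl.
Qed.

Lemma right_loop_of_dpath : dpath L R e r^-1 ->
  exists j a b, is_word (invset L) j a /\ is_word R (S j) b /\ a * b = e.
Proof.
  rewrite dpath_iff_sandwich. intros (n & A & B & WA & WB & rAB).
  exists n, A, (B * r). repeat split; [auto | constructor; auto |].
  rewrite gmul1r in rAB. rewrite gmulA, <- rAB. apply gmulVl.
Qed.

End Necessity.

Section Sufficiency.

Variables i j : nat.
Hypotheses (loop_l : sandwich (S i) i e e) (loop_r : sandwich j (S j) e e).

Lemma dpath_from_one h : setmul (Wd (invset L)) (Wd R) h -> dpath L R e h.
Proof.
  intros (A & B & [p [_ WA]] & [q [_ WB]] & ->).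
  apply dpath_iff_sandwich.
  apply (diag_of_shift_closed (fun p q => sandwich p q e (A * B)) i j) with p q.
  - intros p' q' H. rewrite (Nat.add_comm p'), (Nat.add_comm q').
    exact (sandwich_trans _ _ _ _ _ _ _ loop_l H).
  - intros p' q' H. rewrite (Nat.add_comm p'), (Nat.add_comm q').
    exact (sandwich_trans _ _ _ _ _ _ _ loop_r H).
  - exists A, B. repeat split; auto. assoc. reflexivity.
Qed.

Lemma dpath_to_one g : setmul (Wd L) (Wd (invset R)) g -> dpath L R g e.
Proof.
  intros (C & D & [p [_ WC]] & [q [_ WD]] & ->).
  apply dpath_iff_sandwich.
  apply (diag_of_shift_closed (fun p q => sandwich p q (C * D) e) i j) with p q.
  - intros p' q' H. exact (sandwich_trans _ _ _ _ _ _ _ H loop_l).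
  - intros p' q' H. exact (sandwich_trans _ _ _ _ _ _ _ H loop_r).
  - exists C^-1, D^-1. repeat split; [apply is_word_inv | apply is_word_invset_inv |]; auto.
    assoc. rewrite gmulVl, gmul1l, gmulVr. reflexivity.
Qed.

End Sufficiency.

End Words.

Theorem mainTheorem1 (G : Group) (L R : G -> Prop)
    (hL : nonempty L) (hR : nonempty R) :
  strongly_connected L R <->
  ((forall g : G, setmul (Wd (invset L)) (Wd R) g) /\
   (forall g : G, setmul (Wd L) (Wd (invset R)) g) /\
   (exists i : nat, exists a b : G,
      is_word (invset L) (S i) a /\ is_word R i b /\ gmul a b = gone) /\
   (exists j : nat, exists a b : G,
      is_word (invset L) j a /\ is_word R (S j) b /\ gmul a b = gone)).
Proof.
  destruct hL as [l Ll], hR as [r Rr]. split.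
  - intro sc. repeat split.
    + intro g. apply (setmul_W_of_dpath G L R l r); [auto | auto | apply sc].
    + intro g. apply (setmul_W_inv_of_dpath G L R l r); [auto | auto | apply sc].
    + apply (left_loop_of_dpath G L R l); [auto | apply sc].
    + apply (right_loop_of_dpath G L R r); [auto | apply sc].
  - intros (W_LR & W_LR' & (i & a & b & Wa & Wb & ab) & (j & a' & b' & Wa' & Wb' & ab')).
    pose proof (sandwich_one_of_mul G L R _ _ _ _ Wa Wb ab) as loop_l.
    pose proof (sandwich_one_of_mul G L R _ _ _ _ Wa' Wb' ab') as loop_r.
    intros g h. split; apply rt_trans with gone;
      solve [eapply dpath_to_one; eauto | eapply dpath_from_one; eauto].
Qed.
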